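(* Let $\mathcal{X}$ be a Polish space, let $Q$ be a probability transition kernel on $\mathcal{X}$, and let $\mathcal{X}_n\in\mathcal{B}(\mathcal{X})$, $n\in\mathbb{N}$, be a non-decreasing sequence of Borel sets with $\mathcal{X}_0\neq\emptyset$. Assume there exist a non-increasing sequence $\alpha_n\in(0,1]$ and probability measures $\nu_n$ on $\mathcal{B}(\mathcal{X})$, $n\in\mathbb{N}$, such that $$Q(x,A)\ge \alpha_n\nu_n(A)\quad\text{for all } A\in\mathcal{B}(\mathcal{X}),\ x\in\mathcal{X}_n,\ n\in\mathbb{N}.$$ Then there exists a probability $\mu_*$ on $\mathcal{B}(\mathcal{X})$ such that for every Markov chain $X_t$, $t\in\mathbb{N}$, with transition kernel $Q$ whose initial law $\mathcal{L}(X_0)$ belongs to $\mathfrak{P}_b$, one has $\|\mathcal{L}(X_t)-\mu_*\|_{TV}\to 0$ as $t\to\infty$.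
   Context: $\mathfrak{P}_b$ denotes the set of probabilities $\mu$ on $\mathcal{B}(\mathcal{X})$ such that, if the Markov chain $X_t$ with kernel $Q$ is started with $\mathcal{L}(X_0)=\mu$, then $\lim_{n\to\infty}\sup_{t\in\mathbb{N}}P(X_t\notin\mathcal{X}_n)=0$. For a finite signed measure $\mu$, $\|\mu\|_{TV}:=\sup_{|\phi|\le 1}|\int\phi\,d\mu|$, the supremum over measurable $\phi$ bounded by $1$ in absolute value. $\mathcal{L}(Z)$ denotes the law of $Z$. *)

From HB Require Import structures.
From mathcomp Require Import all_boot all_order all_algebra.
From mathcomp Require Import all_classical all_reals all_analysis.
Set Implicit Arguments. Unset Strict Implicit. Unset Printing Implicit Defensive.
Import Order.TTheory GRing.Theory Num.Theory.
Import numFieldNormedType.Exports.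
Local Open Scope classical_set_scope.
Local Open Scope ring_scope.

Definition polish (R : realType) (T : ptopologicalType) : Prop :=
  exists dist : T -> T -> R,
  (forall x y, dist x y = 0 <-> x = y) /\
      (forall x y, dist x y = dist y x) /\
      (forall x y z, dist x z <= dist x y + dist y z) /\
      (forall A : set T, open A <->
         forall x, A x -> exists2 e : R, 0 < e & [set y | dist x y < e] `<=` A) /\
      (forall u : nat -> T,
         (forall e : R, 0 < e -> exists N, forall m n, (N <= m)%N -> (N <= n)%N ->
            dist (u m) (u n) < e) ->
         exists l, forall e : R, 0 < e -> exists N, forall n, (N <= n)%N ->
            dist (u n) l < e) /\
      exists D : set T, countable D /\
        (forall A : set T, open A -> A !=set0 -> (D `&` A) !=set0).

Notation Borel T := (g_sigma_algebraType (@open T)).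

Section Defs.
Context (R : realType) (T : ptopologicalType).
Local Notation X := (Borel T).

Definition markov_chain (Q : R.-pker X ~> X) dO (Omega : measurableType dO)
    (P : probability Omega R) (Y : nat -> Omega -> X) : Prop :=
  (forall t, measurable_fun [set: Omega] (Y t)) /\
  forall (t : nat) (B : nat -> set X) (A : set X),
    (forall s, measurable (B s)) -> measurable A ->
    P ([set w | forall s, (s <= t)%N -> B s (Y s w)] `&` (Y t.+1 @^-1` A)) =
    (\int[P]_(w in [set w | forall s, (s <= t)%N -> B s (Y s w)]) Q (Y t w) A)%E.

Definition Pb (Q : R.-pker X ~> X) (Xn : nat -> set X) (mu : set X -> \bar R) : Prop :=
  forall dO (Omega : measurableType dO) (P : probability Omega R)
         (Y : nat -> Omega -> X),
    markov_chain Q P Y ->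
    (forall A, measurable A -> P (Y 0%N @^-1` A) = mu A) ->
    (fun n => ereal_sup [set P (Y t @^-1` (~` Xn n)) | t in [set: nat]])
      @ \oo --> 0%E.

Definition tv_dist (mu nu : set X -> \bar R) : \bar R :=
  ereal_sup [set `| (\int[mu]_x (phi x)%:E - \int[nu]_x (phi x)%:E)%E |%E
            | phi in [set phi : X -> R | measurable_fun [set: X] phi /\
                                         forall x, `|phi x| <= 1]].
End Defs.

(* Doeblin's coupling argument with a minorization that only holds locally.
   If two laws evolving under Q give mass at most eps to the complement of
   X_n, splitting Q(x, .) on X_n as alpha_n nu_n + (1 - alpha_n) R(x, .)
   contracts their setwise distance: d_{t+1} <= (1 - alpha_n) d_t + alpha_n eps,
   hence d_t <= (1 - alpha_n)^t + eps.  Laws in P_b put uniformly little mass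
   outside X_n for n large, so any two such evolutions merge setwise.  Applied
   to a chain and its time shifts this makes the laws setwise Cauchy; their
   setwise limit is mu_*, and the total variation distance is at most twice
   the setwise distance. *)

From HB Require Import structures.
From mathcomp Require Import all_boot all_order all_algebra.
From mathcomp Require Import all_classical all_reals all_analysis.
From mathcomp Require Import measurable_realfun ring lra zify.
Import Order.TTheory GRing.Theory Num.Theory.
Import numFieldNormedType.Exports.
Set Implicit Arguments. Unset Strict Implicit. Unset Printing Implicit Defensive.
Local Open Scope classical_set_scope.
Local Open Scope ring_scope.

Section probability_values.
Context d (T : measurableType d) (R : realType).
Implicit Types (mu nu : probability T R) (A B : set T).

Definition Pr mu A : R := fine (mu A).

Lemma PrE mu A : measurable A -> mu A = (Pr mu A)%:E.
Proof. by move=> mA; rewrite /Pr fineK // fin_num_measure. Qed.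

Lemma Pr_ge0 mu A : 0 <= Pr mu A.
Proof. exact/fine_ge0/measure_ge0. Qed.

Lemma Pr_le1 mu A : measurable A -> Pr mu A <= 1.
Proof. by move=> mA; rewrite -lee_fin -PrE // probability_le1. Qed.

Lemma PrT mu : Pr mu setT = 1.
Proof. by rewrite /Pr probability_setT. Qed.

Lemma le_Pr mu A B : measurable A -> measurable B -> A `<=` B -> Pr mu A <= Pr mu B.
Proof. by move=> mA mB AB; rewrite -lee_fin -!PrE //; apply: le_measure; rewrite ?inE. Qed.

Lemma PrC mu A : measurable A -> Pr mu (~` A) = 1 - Pr mu A.
Proof.
move=> mA; have := measureU mu mA (measurableC mA).
rewrite setUv setICr => /(_ erefl) h.
have : (1%E : \bar R) = (Pr mu A + Pr mu (~` A))%:E.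
  by rewrite -(probability_setT mu) h EFinD -!PrE //; exact: measurableC.
by move=> [->]; ring.
Qed.

Lemma probability_bounded_integrable mu (f : T -> R) (M : R) :
  measurable_fun setT f -> (forall x, `|f x| <= M) -> mu.-integrable setT (EFin \o f).
Proof.
move=> mf fM; apply: measurable_bounded_integrable => //.
  exact: le_lt_trans (probability_le1 mu measurableT) (ltry _).
exists M; split; first exact: num_real.
by move=> K MK x _ /=; apply: le_trans (fM x) (ltW MK).
Qed.

Lemma Rintegral_indic_prob mu A : measurable A -> \int[mu]_x (\1_A x) = Pr mu A.
Proof. by move=> mA; rewrite /Rintegral integral_indic // setIT. Qed.

Lemma Rintegral_cst_prob mu (c : R) : \int[mu]_x c = c.
Proof. by rewrite Rintegral_cst //; have := PrT mu; rewrite /Pr => ->; rewrite mulr1. Qed.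

Definition setwise_close mu nu (r : R) :=
  forall A, measurable A -> `|Pr mu A - Pr nu A| <= r.

Lemma setwise_closeC mu nu r : setwise_close mu nu r -> setwise_close nu mu r.
Proof. by move=> c A mA; rewrite distrC; exact: c. Qed.

Lemma setwise_close_le mu nu r r' :
  r <= r' -> setwise_close mu nu r -> setwise_close mu nu r'.
Proof. by move=> rr c A mA; exact: le_trans (c A mA) rr. Qed.

Lemma setwise_close_trans (m1 m2 m3 : probability T R) (r1 r2 : R) :
  setwise_close m1 m2 r1 -> setwise_close m2 m3 r2 -> setwise_close m1 m3 (r1 + r2).
Proof.
move=> c12 c23 A mA; apply: le_trans (_ : `|(Pr m1 A - Pr m2 A) + (Pr m2 A - Pr m3 A)| <= _).
  by rewrite addrA subrK.
by apply: le_trans (ler_normD _ _) _; rewrite lerD ?c12 ?c23.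
Qed.

Definition setwise_cauchy (m : nat -> probability T R) := forall e : R, 0 < e ->
  exists T0, forall t s, (T0 <= t)%N -> setwise_close (m t) (m (t + s)%N) e.

End probability_values.

Section staircase.
Context (R : realType).

Lemma sum_lt_nat (N k : nat) : \sum_(j < N) (j < k)%N%:R = (minn N k)%:R :> R.
Proof.
elim: N => [|N IH]; first by rewrite big_ord0 min0n.
by rewrite big_ord_recr /= IH -natrD; congr _%:R; case: ltnP => /=; lia.
Qed.

Lemma sum_steps_truncn (M : nat) (y : R) : 0 <= y <= 1 ->
  \sum_(j < M.+1) (j.+1%:R / M.+1%:R <= y)%R%:R = (Num.truncn (M.+1%:R * y))%:R :> R.
Proof.
move=> /andP[y0 y1]; have M0 : 0 < M.+1%:R :> R by rewrite ltr0n.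
have kM : (Num.truncn (M.+1%:R * y) <= M.+1)%N.
  rewrite truncn_le_nat; apply: le_lt_trans (_ : _ <= M.+1%:R) _.
    by rewrite -[leRHS]mulr1 ler_wpM2l // ltW.
  by rewrite ltr_nat.
rewrite -(minn_idPr kM) -sum_lt_nat; apply: eq_bigr => j _.
by rewrite truncn_gt_nat ler_pdivrMr // mulrC.
Qed.

Lemma truncn_steps_bounds (M : nat) (y : R) : 0 <= y ->
  let s := M.+1%:R^-1 * (Num.truncn (M.+1%:R * y))%:R in s <= y <= s + M.+1%:R^-1.
Proof.
move=> y0 /=; have M0 : 0 < M.+1%:R :> R by rewrite ltr0n.
have /andP[kl ku] := truncn_itv (mulr_ge0 (ltW M0) y0).
rewrite ler_pdivrMl // kl /= -[X in _ + X]mulr1 -mulrDr ler_pdivlMl //.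
by rewrite natr1 ltW.
Qed.

End staircase.

Section setwise_integral.
Context d (T : measurableType d) (R : realType).
Implicit Types (mu nu : probability T R) (h : T -> R).

Definition staircase (N : nat) h (x : T) : R :=
  \sum_(j < N.+1) N.+1%:R^-1 * \1_[set y | j.+1%:R / N.+1%:R <= h y] x.

Lemma staircaseE N h x : 0 <= h x <= 1 ->
  staircase N h x = N.+1%:R^-1 * (Num.truncn (N.+1%:R * h x))%:R.
Proof.
move=> h01; rewrite /staircase -mulr_sumr -sum_steps_truncn //; congr (_ * _).
apply: eq_bigr => j _; rewrite indicE; congr ((_ : bool)%:R).
by apply/idP/idP => [/set_mem|?]; last exact/mem_set.
Qed.

Lemma measurable_level_set h (a : R) :
  measurable_fun setT h -> measurable [set y | a <= h y].
Proof.
move=> mh; have -> : [set y | a <= h y] = h @^-1` `[a, +oo[.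
  by apply/seteqP; split => x /=; rewrite in_itv /= andbT.
by rewrite -[X in measurable X]setTI; apply: mh => //; exact: measurable_itv.
Qed.

Lemma measurable_staircase N h :
  measurable_fun setT h -> measurable_fun setT (staircase N h).
Proof.
move=> mh; apply: measurable_sum => j.
apply: measurable_funM => //; apply: measurable_indic.
exact: measurable_level_set.
Qed.

Lemma Rintegral_staircase mu N h : measurable_fun setT h ->
  \int[mu]_x staircase N h x =
  \sum_(j < N.+1) N.+1%:R^-1 * Pr mu [set y | j.+1%:R / N.+1%:R <= h y].
Proof.
move=> mh; rewrite /Rintegral.
under eq_integral => x _ do rewrite /staircase -sumEFin.
rewrite ge0_integral_sum //; last first.
  move=> j; apply/measurable_EFinP; apply: measurable_funM => //.
  by apply: measurable_indic; exact: measurable_level_set.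
rewrite (eq_bigr (fun j : 'I_N.+1 =>
  (N.+1%:R^-1 * Pr mu [set y | j.+1%:R / N.+1%:R <= h y])%:E)) ?sumEFin // => j _.
have mA := measurable_level_set (j.+1%:R / N.+1%:R) mh.
under eq_integral do rewrite EFinM.
rewrite ge0_integralZl_EFin //; last exact/measurable_EFinP/measurable_indic.
by rewrite integral_indic // setIT EFinM -PrE.
Qed.

Lemma staircase_bounds N h x : 0 <= h x <= 1 ->
  0 <= staircase N h x /\ staircase N h x <= h x <= staircase N h x + N.+1%:R^-1.
Proof.
move=> h01; rewrite staircaseE //; split; first by rewrite mulr_ge0.
by apply: truncn_steps_bounds; case/andP: h01.
Qed.

Lemma Rintegral_sub_le_setwise mu nu r h N :
  setwise_close mu nu r -> measurable_fun setT h -> (forall x, 0 <= h x <= 1) ->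
  \int[mu]_x h x - \int[nu]_x h x <= r + N.+1%:R^-1.
Proof.
move=> cmn mh h01; set s := staircase N h; set M := N.+1.
have Mi0 : 0 <= M%:R^-1 :> R by rewrite invr_ge0.
have ms : measurable_fun setT s := measurable_staircase N mh.
have sh x : 0 <= s x /\ s x <= h x <= s x + M%:R^-1 := staircase_bounds N (h01 x).
have hb x : `|h x| <= 1 by have /andP[? ?] := h01 x; rewrite ger0_norm.
have sb x : `|s x| <= 1.
  have [? /andP[? ?]] := sh x; have /andP[_ ?] := h01 x.
  by rewrite ger0_norm //; lra.
have hI (m : probability T R) := probability_bounded_integrable m mh hb.
have sI (m : probability T R) := probability_bounded_integrable m ms sb.
have cI (m : probability T R) := @probability_bounded_integrable _ T R m
  (fun=> M%:R^-1) _ (measurable_cst _) (fun=> lexx _).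
have h_le : \int[mu]_x h x <= \int[mu]_x s x + M%:R^-1.
  rewrite -[X in _ + X](Rintegral_cst_prob mu) -RintegralD //; [|exact: sI|exact: cI].
  apply: le_Rintegral => //; [exact: hI | | by move=> x _; have [_ /andP[]] := sh x].
  apply: (@probability_bounded_integrable _ _ _ _ _ (1 + `|M%:R^-1|)).
    exact: measurable_funD.
  by move=> x; apply: le_trans (ler_normD _ _) _; rewrite lerD.
have s_le : \int[nu]_x s x <= \int[nu]_x h x.
  by apply: le_Rintegral => //; [exact: sI | exact: hI | move=> x _; have [_ /andP[]] := sh x].
have ss_le : \int[mu]_x s x - \int[nu]_x s x <= r.
  rewrite !Rintegral_staircase // -sumrB.
  apply: le_trans (_ : \sum_(j < M) M%:R^-1 * r <= _).
    apply: ler_sum => j _; rewrite -mulrBr ler_wpM2l //.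
    by apply: le_trans (ler_norm _) (cmn _ (measurable_level_set _ mh)).
  by rewrite -mulr_sumr sumr_const card_ord -[r *+ M]mulr_natl mulrA mulVf ?mul1r // pnatr_eq0.
lra.
Qed.

Lemma Rintegral_dist_le_setwise mu nu r h :
  setwise_close mu nu r -> measurable_fun setT h -> (forall x, 0 <= h x <= 1) ->
  `|\int[mu]_x h x - \int[nu]_x h x| <= r.
Proof.
move=> cmn mh h01.
have le_r m m' : setwise_close m m' r -> \int[m]_x h x - \int[m']_x h x <= r.
  move=> cmm; apply/ler_addgt0Pr => e e0.
  have [N _ HN] := near_infty_natSinv_lt (PosNum e0).
  apply: le_trans (Rintegral_sub_le_setwise N cmm mh h01) _.
  by rewrite lerD2l ltW //; apply: HN => /=.
by rewrite ler_norml le_r // andbT lerNl opprB le_r //; exact: setwise_closeC.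
Qed.

End setwise_integral.

Section doeblin.
Context d (T : measurableType d) (R : realType).
Implicit Types (mu nu : probability T R) (S : set T).

Lemma Rintegral_lincomb mu (f1 f2 : T -> R) (b1 b2 : R) :
  mu.-integrable setT (EFin \o f1) -> mu.-integrable setT (EFin \o f2) ->
  \int[mu]_x (b1 * f1 x + b2 * f2 x) = b1 * \int[mu]_x f1 x + b2 * \int[mu]_x f2 x.
Proof.
move=> i1 i2; have iZ b f : mu.-integrable setT (EFin \o f) ->
    mu.-integrable setT (EFin \o (fun x => b * f x)).
  by move=> i; apply: eq_integrable (integrableZl measurableT b i).
by rewrite RintegralD ?iZ // !RintegralZl.
Qed.

Lemma unit_bounded_integrable mu (f : T -> R) :
  measurable_fun setT f -> (forall x, 0 <= f x <= 1) -> mu.-integrable setT (EFin \o f).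
Proof.
move=> mf f01; apply: (@probability_bounded_integrable _ _ _ _ _ 1 mf) => x.
by have /andP[? ?] := f01 x; rewrite ger0_norm.
Qed.

Lemma indic01 S x : 0 <= (\1_S x : R) <= 1.
Proof. by rewrite indicE; case: (_ \in _); rewrite /= ?ler01 ?lexx. Qed.

(* junk value: for [a = 1], [(y - a c) / (1 - a)] is [0], and indeed [y = c] then *)
Lemma doeblin_split (a c y : R) (b : bool) : 0 < a <= 1 -> 0 <= c <= 1 -> 0 <= y <= 1 ->
  (b -> a * c <= y <= 1 - a + a * c) ->
  let k := b%:R * ((y - a * c) / (1 - a)) + (~~ b)%:R * y in
  let j := c * b%:R + (~~ b)%:R * y in
  [/\ 0 <= k <= 1, 0 <= j <= 1 & y = (1 - a) * k + a * j].
Proof.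
move=> /andP[a0 a1] /andP[c0 c1] /andP[y0 y1] hb /=.
case: b hb => [/(_ isT) /andP[l u]|_]; rewrite /= ?mulr1n ?mulr0n; last first.
  by split; [apply/andP; split; lra | apply/andP; split; lra | ring].
rewrite !mul1r mul0r !addr0 mulr1 c0 c1; split=> //.
  have [a1e|a1'] := eqVneq a 1; first by rewrite a1e subrr invr0 mulr0 lexx ler01.
  have a1'' : 0 < 1 - a by rewrite subr_gt0 lt_neqAle a1' a1.
  apply/andP; split; first by rewrite divr_ge0 ?subr_ge0 // ltW.
  by rewrite ler_pdivrMr // mul1r; lra.
have [a1e|a1'] := eqVneq a 1; first by rewrite a1e in l u *; lra.
by rewrite mulrC divfK ?subr_eq0 1?eq_sym //; ring.
Qed.

Lemma Rintegral_le_Pr mu S (f : T -> R) : measurable S -> measurable_fun setT f ->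
  (forall x, 0 <= f x <= \1_S x) -> 0 <= \int[mu]_x f x <= Pr mu S.
Proof.
move=> mS mf f01; have fb x : 0 <= f x <= 1.
  by have /andP[? /le_trans ->] := f01 x; rewrite ?andbT //; case/andP: (indic01 S x).
apply/andP; split; first by apply: Rintegral_ge0 => x _; case/andP: (f01 x).
rewrite -Rintegral_indic_prob //; apply: le_Rintegral => //.
- exact: unit_bounded_integrable.
- exact/unit_bounded_integrable/indic01/measurable_indic.
- by move=> x _; case/andP: (f01 x).
Qed.

Lemma doeblin_estimate (a c r eps p p' q q' u u' : R) :
  0 < a <= 1 -> 0 <= c <= 1 -> `|p - p'| <= r ->
  0 <= q <= u -> 0 <= q' <= u' -> u <= eps -> u' <= eps ->
  `|(1 - a) * p + a * (c * (1 - u) + q) - ((1 - a) * p' + a * (c * (1 - u') + q'))|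
    <= (1 - a) * r + a * eps.
Proof.
move=> /andP[/ltW a0 a1] /andP[c0 c1] dp /andP[q0 qu] /andP[q'0 q'u] eu eu'.
have c1' : 0 <= 1 - c by rewrite subr_ge0.
(* [q - c u] lies in [[-c u, (1 - c) u]], an interval of length [u <= eps]
   around [0], and likewise for the primed quantities. *)
have dq : `|c * (1 - u) + q - (c * (1 - u') + q')| <= eps.
  have := ler_wpM2l c0 eu; have := ler_wpM2l c0 eu'.
  have := ler_wpM2l c1' eu; have := ler_wpM2l c1' eu'.
  by rewrite ler_norml => *; apply/andP; split; nra.
have a1' : 0 <= 1 - a by rewrite subr_ge0.
rewrite (_ : _ - _ = (1 - a) * (p - p') + a * (c * (1 - u) + q - (c * (1 - u') + q')));
  last by ring.
apply: le_trans (ler_normD _ _) _.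
by rewrite !normrM (ger0_norm a0) (ger0_norm a1') lerD // ler_wpM2l.
Qed.

Section doeblin_decomposition.
Variables (S : set T) (g : T -> R) (a c : R).
Hypotheses (mS : measurable S) (mg : measurable_fun setT g) (g01 : forall x, 0 <= g x <= 1).
Hypotheses (a01 : 0 < a <= 1) (c01 : 0 <= c <= 1).
Hypothesis gS : forall x, S x -> a * c <= g x <= 1 - a + a * c.

Definition doeblin_tail x := \1_(~` S) x * g x.

Definition doeblin_residual x := \1_S x * ((g x - a * c) / (1 - a)) + doeblin_tail x.

Let indicC x : \1_(~` S) x = (~~ (x \in S))%:R :> R.
Proof. by rewrite !indicE in_setC. Qed.

Let doeblin_split_at x :
  [/\ 0 <= doeblin_residual x <= 1, 0 <= c * \1_S x + doeblin_tail x <= 1 &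
      g x = (1 - a) * doeblin_residual x + a * (c * \1_S x + doeblin_tail x)].
Proof.
rewrite /doeblin_residual /doeblin_tail indicC indicE.
by apply: doeblin_split => // /set_mem; exact: gS.
Qed.

Lemma doeblin_residual01 x : 0 <= doeblin_residual x <= 1.
Proof. by case: (doeblin_split_at x). Qed.

Lemma doeblin_tail_le x : 0 <= doeblin_tail x <= \1_(~` S) x.
Proof.
by rewrite /doeblin_tail indicC; case: (x \in S); rewrite /= ?mulr1n ?mulr0n ?mul0r ?mul1r ?lexx.
Qed.

Lemma measurable_doeblin_tail : measurable_fun setT doeblin_tail.
Proof. by apply: measurable_funM => //; exact/measurable_indic/measurableC. Qed.

Lemma measurable_doeblin_residual : measurable_fun setT doeblin_residual.
Proof.
apply: measurable_funD; last exact: measurable_doeblin_tail.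
apply: measurable_funM; first exact: measurable_indic.
by apply: measurable_funM => //; apply: measurable_funB.
Qed.

Lemma Rintegral_doeblin mu : \int[mu]_x g x =
  (1 - a) * \int[mu]_x doeblin_residual x + a * (c * Pr mu S + \int[mu]_x doeblin_tail x).
Proof.
have mI := measurable_indic mS (R := R).
have tailI : mu.-integrable setT (EFin \o doeblin_tail).
  apply: unit_bounded_integrable measurable_doeblin_tail _ => x.
  have /andP[t0 tS] := doeblin_tail_le x; have /andP[_ S1] := indic01 (~` S) x.
  by rewrite t0 (le_trans tS S1).
have cS01 x : 0 <= c * \1_S x <= 1.
  by case/andP: c01 => ? ?; case/andP: (indic01 S x) => ? ?; rewrite mulr_ge0 ?mulr_ile1.
have gE x : g x = (1 - a) * doeblin_residual x + a * (c * \1_S x + doeblin_tail x).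
  by case: (doeblin_split_at x).
have jI : \int[mu]_x (c * \1_S x + doeblin_tail x) = c * Pr mu S + \int[mu]_x doeblin_tail x.
  rewrite RintegralD ?RintegralZl ?Rintegral_indic_prob //.
    exact/unit_bounded_integrable/indic01.
  by apply: unit_bounded_integrable cS01; exact: measurable_funM.
rewrite (eq_Rintegral _ (fun x _ => gE x)) Rintegral_lincomb ?jI //.
- exact: unit_bounded_integrable measurable_doeblin_residual doeblin_residual01.
- apply: unit_bounded_integrable; last by move=> x; case: (doeblin_split_at x).
  by apply: measurable_funD => //; [exact: measurable_funM | exact: measurable_doeblin_tail].
Qed.

End doeblin_decomposition.

Lemma doeblin_contraction mu nu S (g : T -> R) (a c r eps : R) :
  measurable S -> measurable_fun setT g -> (forall x, 0 <= g x <= 1) ->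
  0 < a <= 1 -> 0 <= c <= 1 ->
  (forall x, S x -> a * c <= g x <= 1 - a + a * c) ->
  setwise_close mu nu r -> Pr mu (~` S) <= eps -> Pr nu (~` S) <= eps ->
  `|\int[mu]_x g x - \int[nu]_x g x| <= (1 - a) * r + a * eps.
Proof.
move=> mS mg g01 a01 c01 gS cmn eS eS'.
have mSC := measurableC mS.
have PrS (m : probability T R) : Pr m S = 1 - Pr m (~` S) by rewrite -PrC ?setCK.
rewrite !(Rintegral_doeblin mS mg g01 a01 c01 gS) !PrS.
have tail_le := Rintegral_le_Pr _ mSC (measurable_doeblin_tail mS mg) (doeblin_tail_le S g01).
apply: doeblin_estimate => //.
exact: Rintegral_dist_le_setwise cmn (measurable_doeblin_residual a c mS mg)
  (doeblin_residual01 g01 a01 c01 gS).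
Qed.

End doeblin.

Section kernel_evolution.
Context d (T : measurableType d) (R : realType) (Q : R.-pker T ~> T).
Implicit Types (m : nat -> probability T R) (A S : set T).

Definition kernel_Pr A x : R := fine (Q x A).

Lemma kernel_PrE A x : measurable A -> Q x A = (kernel_Pr A x)%:E.
Proof.
move=> mA; rewrite /kernel_Pr fineK // ge0_fin_numE ?measure_ge0 //.
apply: le_lt_trans (ltry 1); rewrite -(@prob_kernel _ _ _ _ _ Q x).
by apply: le_measure; rewrite ?inE.
Qed.

Lemma kernel_Pr_ge0 A x : 0 <= kernel_Pr A x.
Proof. exact/fine_ge0/measure_ge0. Qed.

Lemma kernel_PrC A x : measurable A -> kernel_Pr (~` A) x = 1 - kernel_Pr A x.
Proof.
move=> mA; have := measureU (Q x) mA (measurableC mA).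
rewrite setUv setICr => /(_ erefl) QU.
have : (1%E : \bar R) = (kernel_Pr A x + kernel_Pr (~` A) x)%:E.
  by rewrite -(@prob_kernel _ _ _ _ _ Q x) QU EFinD -!kernel_PrE //; exact: measurableC.
by move=> [->]; ring.
Qed.

Lemma kernel_Pr01 A x : measurable A -> 0 <= kernel_Pr A x <= 1.
Proof.
move=> mA; rewrite kernel_Pr_ge0 -subr_ge0 -kernel_PrC //; exact: kernel_Pr_ge0.
Qed.

Lemma measurable_kernel_Pr A : measurable A -> measurable_fun setT (kernel_Pr A).
Proof.
move=> mA; apply/measurable_EFinP.
rewrite (_ : _ \o _ = fun x => Q x A); first exact: measurable_kernel.
by apply/funext => x /=; rewrite -kernel_PrE.
Qed.

Lemma minorization_kernel_Pr S (a : R) (nu : probability T R) :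
  (forall x A, S x -> measurable A -> (a%:E * nu A <= Q x A)%E) ->
  forall x A, S x -> measurable A ->
  a * Pr nu A <= kernel_Pr A x <= 1 - a + a * Pr nu A.
Proof.
move=> minor x A Sx mA; have mAC := measurableC mA.
have := minor x A Sx mA; have := minor x _ Sx mAC.
rewrite !kernel_PrE // !PrE // -!EFinM !lee_fin kernel_PrC // PrC //.
by move=> *; apply/andP; split; lra.
Qed.

Definition evolves m := forall t A, measurable A -> m t.+1 A = (\int[m t]_x Q x A)%E.

Lemma evolves_Pr m t A : evolves m -> measurable A ->
  Pr (m t.+1) A = \int[m t]_x kernel_Pr A x.
Proof.
move=> ev mA; rewrite /Pr ev // /Rintegral; congr fine.
by apply: eq_integral => x _; rewrite kernel_PrE.
Qed.

Lemma evolves_shift m s : evolves m -> evolves (fun t => m (t + s)%N).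
Proof. by move=> ev t; exact: ev. Qed.

Lemma evolves_setwise_close m m' S (a eps : R) (nu : probability T R) :
  measurable S -> 0 < a <= 1 ->
  (forall x A, S x -> measurable A -> (a%:E * nu A <= Q x A)%E) ->
  evolves m -> evolves m' ->
  (forall t, Pr (m t) (~` S) <= eps) -> (forall t, Pr (m' t) (~` S) <= eps) ->
  forall t, setwise_close (m t) (m' t) ((1 - a) ^+ t + eps).
Proof.
move=> mS a01 minor ev ev' eS eS'; have /andP[a0 a1] := a01.
have e0 : 0 <= eps by apply: le_trans (eS 0%N); exact: Pr_ge0.
elim=> [|t IH] A mA.
  have := Pr_le1 (m 0%N) mA; have := Pr_le1 (m' 0%N) mA.
  have := Pr_ge0 (m 0%N) A; have := Pr_ge0 (m' 0%N) A.
  by rewrite expr0 ler_norml => *; apply/andP; split; lra.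
rewrite !evolves_Pr //.
have c01 : 0 <= Pr nu A <= 1 by rewrite Pr_ge0 Pr_le1.
have g01 x : 0 <= kernel_Pr A x <= 1 := kernel_Pr01 x mA.
have gS x : S x -> a * Pr nu A <= kernel_Pr A x <= 1 - a + a * Pr nu A.
  by move=> Sx; exact: (minorization_kernel_Pr minor Sx mA).
apply: le_trans (doeblin_contraction mS (measurable_kernel_Pr mA) g01
  a01 c01 gS IH (eS t) (eS' t)) _.
by rewrite exprS; lra.
Qed.

End kernel_evolution.

Lemma geometric_eventually_le (R : realType) (a e : R) : 0 < a <= 1 -> 0 < e ->
  exists T0, forall t, (T0 <= t)%N -> (1 - a) ^+ t <= e.
Proof.
move=> /andP[a0 a1] e0.
have a1' : `|1 - a| < 1 by rewrite ger0_norm ?subr_ge0 // ltrBlDr ltrDl.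
have [T0 _ HT] := (cvgrPdist_le _ _).1 (cvg_expr a1') e e0.
exists T0 => t Tt; have := HT t Tt; rewrite /= sub0r normrN.
exact: le_trans (ler_norm _).
Qed.

Section tight_evolutions.
Context d (T : measurableType d) (R : realType) (Q : R.-pker T ~> T).
Variables (Xn : nat -> set T) (alpha : nat -> R) (nu : nat -> probability T R).
Hypotheses (mXn : forall n, measurable (Xn n)) (Xn_incr : forall n, Xn n `<=` Xn n.+1).
Hypothesis alpha01 : forall n, 0 < alpha n <= 1.
Hypothesis minor : forall n x A, Xn n x -> measurable A ->
  ((alpha n)%:E * nu n A <= Q x A)%E.
Implicit Types m : nat -> probability T R.

Definition tight_along m :=
  forall e : R, 0 < e -> exists n, forall t, Pr (m t) (~` Xn n) <= e.

Lemma Xn_homo n k : (n <= k)%N -> Xn n `<=` Xn k.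
Proof.
elim: k => [|k IH]; first by rewrite leqn0 => /eqP ->.
rewrite leq_eqVlt => /orP[/eqP -> //|/IH nk x /nk]; exact: Xn_incr.
Qed.

Lemma tight_along_ge m e : tight_along m -> 0 < e ->
  exists n, forall k t, (n <= k)%N -> Pr (m t) (~` Xn k) <= e.
Proof.
move=> tm e0; have [n Hn] := tm e e0; exists n => k t nk.
apply: le_trans (Hn t); apply: le_Pr; try exact: measurableC.
by apply: subsetC; exact: Xn_homo.
Qed.

Lemma tight_evolutions_close m m' : evolves Q m -> evolves Q m' ->
  tight_along m -> tight_along m' -> forall e : R, 0 < e ->
  exists T0, forall t, (T0 <= t)%N -> setwise_close (m t) (m' t) e.
Proof.
move=> ev ev' tm tm' e e0; have e2 : 0 < e / 2 by rewrite divr_gt0.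
have [n1 H1] := tight_along_ge tm e2; have [n2 H2] := tight_along_ge tm' e2.
pose n := maxn n1 n2.
have [T0 HT] := geometric_eventually_le (alpha01 n) e2.
exists T0 => t Tt; apply: setwise_close_le _ (evolves_setwise_close (mXn n) (alpha01 n)
  (@minor n) ev ev' (H1 n ^~ (leq_maxl _ _)) (H2 n ^~ (leq_maxr _ _)) t).
by have := HT t Tt; lra.
Qed.

Lemma tight_evolution_cauchy m : evolves Q m -> tight_along m -> setwise_cauchy m.
Proof.
move=> ev tm e e0; have e2 : 0 < e / 2 by rewrite divr_gt0.
have [n Hn] := tm _ e2.
have [T0 HT] := geometric_eventually_le (alpha01 n) e2.
exists T0 => t s Tt; apply: setwise_close_le _ (evolves_setwise_close (mXn n) (alpha01 n)
  (@minor n) ev (evolves_shift s ev) Hn (fun u => Hn (u + s)%N) t).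
by have := HT t Tt; lra.
Qed.

End tight_evolutions.

Section setwise_limit.
Context d (T : measurableType d) (R : realType).

Variables (m : nat -> probability T R) (mc : setwise_cauchy m).

(* The Cauchy proof is an argument only so that the probability structure
   declared below can be attached to [setwise_lim mc]. *)
Definition setwise_lim of setwise_cauchy m : set T -> \bar R :=
  fun A => (limn (fun t => Pr (m t) A))%:E.
Local Notation mu := (setwise_lim mc).

Lemma cvg_Pr A : measurable A -> cvgn (fun t => Pr (m t) A).
Proof.
move=> mA; apply: cauchy_cvg; apply: cauchy_exP => e e0.
have e2 : 0 < e / 2 by rewrite divr_gt0.
have [T0 HT] := mc e2; exists (Pr (m T0) A), T0 => // n Tn /=.
have := HT T0 (n - T0)%N (leqnn T0) A mA; rewrite subnKC //.
by move=> /le_lt_trans; apply; rewrite ltr_pdivrMr // ltr_pMr // ltr1n.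
Qed.

Lemma setwise_lim_close e : 0 < e -> exists T0, forall t A, (T0 <= t)%N ->
  measurable A -> `|Pr (m t) A - limn (fun t => Pr (m t) A)| <= e.
Proof.
move=> e0; have [T0 HT] := mc e0; exists T0 => t A Tt mA.
have near_t : \forall s \near \oo, `|Pr (m t) A - Pr (m s) A| <= e.
  by exists t => // s ts /=; have := HT t (s - t)%N Tt A mA; rewrite subnKC.
rewrite ler_norml; apply/andP; split.
  rewrite lerBrDl -lerBrDr; apply: limr_le; first exact: cvg_Pr.
  by apply: filterS near_t => s; rewrite ler_norml => /andP[h _]; lra.
rewrite lerBlDl -lerBlDr; apply: limr_ge; first exact: cvg_Pr.
by apply: filterS near_t => s; rewrite ler_norml => /andP[_ h]; lra.
Qed.

Let setwise_lim0 : mu set0 = 0%E.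
Proof.
rewrite /setwise_lim (_ : (fun t => _) = fun=> 0) ?lim_cst //.
by apply/funext => t; rewrite /Pr measure0.
Qed.

Let setwise_lim_ge0 A : (0 <= mu A)%E.
Proof.
rewrite lee_fin; have [cA|ncA] := pselect (cvgn (fun t => Pr (m t) A)).
  by apply: limr_ge => //; apply: nearW => t; exact: Pr_ge0.
by rewrite dvgP.
Qed.

Let setwise_lim_sigma_additive : semi_sigma_additive mu.
Proof.
move=> F mF tF mU.
pose B N := \big[setU/set0]_(i < N) F i.
have mB N : measurable (B N) by apply: bigsetU_measurable => i _; exact: mF.
have PrB t N : Pr (m t) (B N) = \sum_(i < N) Pr (m t) (F i).
  rewrite /Pr /B measure_bigsetU // -EFin_sum_fine //.
  by move=> i _; exact: fin_num_measure.
have limB N : limn (fun t => Pr (m t) (B N)) = \sum_(i < N) limn (fun t => Pr (m t) (F i)).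
  under eq_fun do rewrite PrB.
  apply: norm_cvg_lim; elim: N => [|N IH].
    under eq_fun do rewrite big_ord0; rewrite big_ord0; exact: cvg_cst.
  under eq_fun do rewrite big_ord_recr /=; rewrite big_ord_recr /=.
  by apply: cvgD => //; exact: cvg_Pr.
have PrU t : (fun N => Pr (m t) (B N)) @ \oo --> Pr (m t) (\bigcup_n F n).
  have -> : (fun N => Pr (m t) (B N)) = fine \o (fun N => \sum_(0 <= i < N) m t (F i)).
    by apply/funext => N /=; rewrite big_mkord /Pr measure_bigsetU.
  by apply: fine_cvg; rewrite -PrE //; exact: measure_semi_sigma_additive.
rewrite /setwise_lim; under eq_fun do rewrite sumEFin.
apply: cvg_EFin; first by apply: nearW.
apply/cvgrPdist_le => e e0; have e3 : 0 < e / 3 by rewrite divr_gt0.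
have [T0 HT] := setwise_lim_close e3.
have [N0 _ HN] := (cvgrPdist_le _ _).1 (PrU T0) _ e3.
exists N0 => // N NN /=; rewrite big_mkord -limB.
have := HT T0 _ (leqnn T0) mU; have := HT T0 _ (leqnn T0) (mB N); have := HN N NN.
by rewrite /= !ler_norml => /andP[? ?] /andP[? ?] /andP[? ?]; apply/andP; split; lra.
Qed.

HB.instance Definition _ := isMeasure.Build _ _ _ mu
  setwise_lim0 setwise_lim_ge0 setwise_lim_sigma_additive.

Let setwise_lim_setT : mu setT = 1%E.
Proof.
by rewrite /setwise_lim (_ : (fun t => _) = fun=> 1) ?lim_cst //; apply/funext => t; exact: PrT.
Qed.

HB.instance Definition _ := Measure_isProbability.Build _ _ _ mu setwise_lim_setT.

Lemma setwise_close_lim e : 0 < e ->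
  exists T0, forall t, (T0 <= t)%N -> setwise_close (m t) (mu : probability T R) e.
Proof.
move=> e0; have [T0 HT] := setwise_lim_close e0.
by exists T0 => t Tt A mA; rewrite /Pr /setwise_lim /=; exact: HT.
Qed.

End setwise_limit.

Lemma cvge0_squeeze (R : realType) (u : nat -> \bar R) :
  (forall e : R, 0 < e -> exists T0, forall t, (T0 <= t)%N -> (0 <= u t <= e%:E)%E) ->
  u @ \oo --> 0%E.
Proof.
move=> ue; apply/fine_cvgP; split.
  have [T0 H] := ue 1 ltr01; exists T0 => // t Tt /=.
  by have /andP[u0 u1] := H t Tt; rewrite ge0_fin_numE // (le_lt_trans u1) ?ltry.
apply/cvgrPdist_le => e e0; have [T0 H] := ue e e0; exists T0 => // t Tt /=.
have /andP[u0 u1] := H t Tt.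
by rewrite sub0r normrN ger0_norm ?fine_ge0 // -lee_fin fineK // ge0_fin_numE // (le_lt_trans u1) ?ltry.
Qed.

Section total_variation.
Context (R : realType) (T : ptopologicalType).
Local Notation X := (Borel T).

Lemma tv_dist_ge0 (mu nu : probability X R) : (0 <= tv_dist mu nu)%E.
Proof.
apply: le_trans (abse_ge0 (\int[mu]_x (0 : R)%:E - \int[nu]_x (0 : R)%:E)%E) _.
apply: ereal_sup_ubound; exists (fun=> 0) => //; split; first exact: measurable_cst.
by move=> x; rewrite normr0 ler01.
Qed.

Lemma tv_dist_le_setwise (mu nu : probability X R) r :
  setwise_close mu nu r -> (tv_dist mu nu <= (2 * r)%:E)%E.
Proof.
move=> cmn; apply: ge_ereal_sup => _ [phi [mphi phi1] <-].
pose h x := (phi x + 1) / 2.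
have mh : measurable_fun setT h.
  by apply: measurable_funM => //; apply: measurable_funD.
have h01 x : 0 <= h x <= 1.
  have := phi1 x; rewrite ler_norml => /andP[? ?].
  by rewrite /h ler_pdivrMr // ler_pdivlMr // mul0r mul1r; apply/andP; split; lra.
have Iphi (m : probability X R) : (\int[m]_x (phi x)%:E = (2 * \int[m]_x h x - 1)%:E)%E.
  have iphi := probability_bounded_integrable m mphi phi1.
  rewrite -[LHS]fineK ?integrable_fin_num //; congr EFin.
  rewrite -/(Rintegral m setT phi) (eq_Rintegral _ (fun x _ => (_ : phi x = 2 * h x + (-1) * 1))).
    rewrite (Rintegral_lincomb (f2 := fun=> 1) 2 (-1)) ?Rintegral_cst_prob ?mulr1 //.
      exact: unit_bounded_integrable mh h01.
    by apply: unit_bounded_integrable => // _; rewrite ler01 lexx.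
  by move=> x _; rewrite /h; field.
rewrite !Iphi -EFinB lee_fin.
have -> : 2 * \int[mu]_x h x - 1 - (2 * \int[nu]_x h x - 1) =
  2 * (\int[mu]_x h x - \int[nu]_x h x) by ring.
by rewrite normrM ger0_norm // ler_wpM2l // Rintegral_dist_le_setwise.
Qed.

End total_variation.

Section chain_law.
Context (R : realType) (T : ptopologicalType) (Q : R.-pker Borel T ~> Borel T).
Context dO (Omega : measurableType dO) (P : probability Omega R).
Variable Y : nat -> Omega -> Borel T.
Hypothesis mc : markov_chain Q P Y.

(* [pushforward P (Y t)] carries no probability structure on its own. *)
Definition chain_law t : probability (Borel T) R :=
  distribution P (mfun_Sub (mem_set (mc.1 t))).

Lemma chain_lawE t : chain_law t = pushforward P (Y t) :> (set _ -> \bar R).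
Proof. by []. Qed.

Lemma markov_chain_evolves : evolves Q chain_law.
Proof.
move=> t A mA; rewrite /chain_law /distribution ge0_integral_pushforward //=.
- have := mc.2 t (fun _ => setT) A (fun _ => measurableT) mA.
  rewrite (_ : [set w | _] = setT) ?setTI //; by apply/seteqP; split.
- exact: mc.1.
- exact: measurable_kernel.
Qed.

Lemma Pb_tight_along Xn : (forall n, measurable (Xn n)) ->
  Pb Q Xn (pushforward P (Y 0%N)) -> tight_along Xn chain_law.
Proof.
move=> mXn pb e e0.
move/fine_cvgP : (pb _ _ P Y mc (fun A mA => erefl)) => [[N1 _ fin] cv].
have [N2 _ HN] := (cvgrPdist_le _ _).1 cv e e0.
exists (maxn N1 N2) => t.
have := HN _ (leq_maxr N1 N2); have := fin _ (leq_maxl N1 N2).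
rewrite /= sub0r normrN => supfin /(le_trans (ler_norm _)); apply: le_trans.
rewrite -lee_fin (fineK supfin) -PrE; last exact: measurableC.
by apply: ereal_sup_ubound; exists t.
Qed.

End chain_law.

Theorem mainTheorem1 (R : realType) (T : ptopologicalType)
  (HT : polish R T)
  (Q : R.-pker (Borel T) ~> (Borel T))
  (Xn : nat -> set (Borel T))
  (mXn : forall n, measurable (Xn n))
  (Xn_incr : forall n, Xn n `<=` Xn n.+1)
  (Xn0 : Xn 0%N !=set0)
  (alpha : nat -> R)
  (alpha_range : forall n, 0 < alpha n <= 1)
  (alpha_decr : forall n, alpha n.+1 <= alpha n)
  (nu : nat -> probability (Borel T) R)
  (minor : forall n x A, Xn n x -> measurable A ->
             ((alpha n)%:E * nu n A <= Q x A)%E) :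
  exists mu_star : probability (Borel T) R,
    forall dO (Omega : measurableType dO) (P : probability Omega R)
           (Y : nat -> Omega -> Borel T),
      markov_chain Q P Y ->
      Pb Q Xn (pushforward P (Y 0%N)) ->
      (fun t => tv_dist (pushforward P (Y t)) mu_star) @ \oo --> 0%E.
Proof.
(* If no tight evolution exists,
   no chain satisfies the hypotheses and any [mu_star] will do. *)
have [[m0 [ev0 tm0]]|none] := pselect (exists m, evolves Q m /\ tight_along Xn m);
  last first.
  exists (nu 0%N) => dO Omega P Y mc pb; exfalso; apply: none.
  have := Pb_tight_along mc mXn pb; have := markov_chain_evolves mc.
  by exists (chain_law mc).
have mc0 := tight_evolution_cauchy mXn alpha_range minor ev0 tm0.
exists (setwise_lim mc0) => dO Omega P Y mc pb; apply: cvge0_squeeze => e e0.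
have e4 : 0 < e / 4 by rewrite divr_gt0.
have [T1 H1] := tight_evolutions_close mXn Xn_incr alpha_range minor
  (markov_chain_evolves mc) ev0 (Pb_tight_along mc mXn pb) tm0 e4.
have [T2 H2] := setwise_close_lim mc0 e4.
exists (maxn T1 T2) => t Tt; rewrite -(chain_lawE mc) tv_dist_ge0 /=.
have := tv_dist_le_setwise (setwise_close_trans (H1 t (leq_trans (leq_maxl _ _) Tt))
  (H2 t (leq_trans (leq_maxr _ _) Tt))).
by move/le_trans; apply; rewrite lee_fin; lra.
Qed.
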